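(* Let $f(x)=\mathbb{E}[F(x,\omega)]$ be $\tau$-strongly convex on $\mathbb{R}^n$ ($\tau>0$), and suppose: (a) for every $\omega\in\Omega$, $F(\cdot,\omega)$ is convex and continuously differentiable on $\mathbb{R}^n$, and $f$ is $C^1$ with $L$-Lipschitz continuous gradient; (b) for all $k\ge 0$, with $\bar w_{k,N_k}\triangleq \nabla f(x_k)-\frac{1}{N_k}\sum_{j=1}^{N_k}\nabla_x F(x_k,\omega_{j,k})$, there are $\nu_1,\nu_2>0$ with $\mathbb{E}[\|\bar w_{k,N_k}\|^2\mid\mathcal{F}_k]\le \frac{\nu_1^2\|x_k\|^2+\nu_2^2}{N_k}$ and $\mathbb{E}[\bar w_{k,N_k}\mid \mathcal{F}_k]=0$ almost surely; (c) every $H_k$ is $\mathcal{F}_k$-measurable, symmetric positive definite, and $\underline{\lambda}\mathbf{I}\preceq H_k\preceq\overline{\lambda}\mathbf{I}$ almost surely for all $k\ge0$, for constants $0<\underline{\lambda}\le\overline{\lambda}$. Let $\{x_k\}$ be generated by $x_{k+1}=x_k-\gamma_kH_k\frac{1}{N_k}\sum_{j=1}^{N_k}\nabla_xF(x_k,\omega_{j,k})$, where $\{N_k\}$ is an increasing sequence of positive integers with $N_0>\frac{2\nu_1^2\overline{\lambda}}{\tau^2\underline{\lambda}}$ and $\gamma_k=\frac{1}{L\overline{\lambda}}$ for all $k$. Then for all $k\ge1$, $$\mathbb{E}[f(x_{k+1})-f(x^* )]\le\Big(1-\frac{\tau\underline{\lambda}}{L\overline{\lambda}}+\frac{2\nu_1^2}{L\tau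 N_0}\Big)\mathbb{E}[f(x_k)-f(x^* )]+\frac{2\nu_1^2\|x^*\|^2+\nu_2^2}{2LN_k}.$$
   Context: $(\Omega,\mathcal{F},\mathbb{P})$ is a probability space, $\xi:\Omega\to\mathbb{R}^o$ a random vector, $F:\mathbb{R}^n\times\mathbb{R}^o\to\mathbb{R}$, and $F(x,\omega)$ abbreviates $F(x,\xi(\omega))$; the problem is $\min_{x\in\mathbb{R}^n}f(x)$ with (unique) minimizer $x^*$. At iteration $k$, $\omega_{1,k},\dots,\omega_{N_k,k}$ are the sampled realizations of $\omega$, $x_0\in\mathbb{R}^n$ is given, and $\mathcal{F}_k\triangleq\sigma\{x_0,x_1,\dots,x_{k-1}\}$. *)

From HB Require Import structures.
From mathcomp Require Import all_boot all_order all_algebra.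
From mathcomp Require Import all_classical all_reals all_analysis.
Set Implicit Arguments. Unset Strict Implicit. Unset Printing Implicit Defensive.
Import Order.TTheory GRing.Theory Num.Theory.
Import numFieldNormedType.Exports.
Local Open Scope classical_set_scope.
Local Open Scope ring_scope.

Definition dotv {R : realType} {n : nat} (u v : 'rV[R]_n) : R :=
  \sum_(i < n) u 0 i * v 0 i.
Definition sqnorm {R : realType} {n : nat} (u : 'rV[R]_n) : R := dotv u u.

Definition convex_fun {R : realType} {n : nat} (g : 'rV[R]_n -> R) : Prop :=
  forall (x y : 'rV[R]_n) (t : R), 0 <= t <= 1 ->
    g (t *: x + (1 - t) *: y) <= t * g x + (1 - t) * g y.

Definition strongly_convex {R : realType} {n : nat} (tau : R)
    (g : 'rV[R]_n -> R) : Prop :=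
  forall (x y : 'rV[R]_n) (t : R), 0 <= t <= 1 ->
    g (t *: x + (1 - t) *: y) <=
      t * g x + (1 - t) * g y - tau / 2 * t * (1 - t) * sqnorm (x - y).

Definition has_gradient {R : realType} {n : nat} (g : 'rV[R]_n -> R)
    (gr : 'rV[R]_n -> 'rV[R]_n) : Prop :=
  forall x : 'rV[R]_n, differentiable g x /\ forall v, 'd g x v = dotv (gr x) v.

Definition loewner_between {R : realType} {n : nat} (lo hi : R)
    (A : 'M[R]_n) : Prop :=
  forall v : 'rV[R]_n, lo * sqnorm v <= (v *m A *m v^T) 0 0 <= hi * sqnorm v.

Definition sym_pos_def {R : realType} {n : nat} (A : 'M[R]_n) : Prop :=
  A^T = A /\ forall v : 'rV[R]_n, v != 0 -> 0 < (v *m A *m v^T) 0 0.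

(* the sigma-algebra generated by the random vectors x_0, ..., x_{k-1}
   (generated by the coordinate preimages of Borel sets, which is the
   sigma-algebra generated by the R^n-valued maps with the Borel structure) *)
Definition gen_sigma {R : realType} {T : Type} {n : nat}
    (x : nat -> T -> 'rV[R]_n) (k : nat) : set (set T) :=
  <<s [set A | exists j i (B : set R),
         (j < k)%N /\ measurable B /\ A = (fun t => x j t 0 i) @^-1` B] >>.

Definition is_cond_exp {R : realType} {d} {T : measurableType d}
    (P : probability T R) (G : set (set T)) (Y Z : T -> R) : Prop :=
  [/\ P.-integrable setT (EFin \o Y),
      P.-integrable setT (EFin \o Z),
      (forall B : set R, measurable B -> G (Z @^-1` B)) &
      (forall A, G A -> (\int[P]_(t in A) (Y t)%:E = \int[P]_(t in A) (Z t)%:E)%E)].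

From HB Require Import structures.
From mathcomp Require Import all_boot all_order all_algebra.
From mathcomp Require Import all_classical all_reals all_analysis.
From mathcomp Require Import ring lra measurable_realfun.
Import Order.TTheory GRing.Theory Num.Theory.
Import numFieldNormedType.Exports.
Local Open Scope classical_set_scope.
Local Open Scope ring_scope.

(* One step with preconditioner [H] (Loewner bounds lo, hi) and step 1/(L hi)
   decreases [f] by [1/(2 L hi) <gradf, gradf>_H] up to the error
   [1/(2L) |gradf - g|^2] of the sampled gradient [g] (descent lemma). Strong
   convexity gives the Polyak-Lojasiewicz inequality 2 tau (f x - f x* ) <= |gradf x|^2,
   hence the contraction factor 1 - tau lo/(L hi). Taking expectations, the tower
   property turns E|gradf - g|^2 into E (nu1^2 |x_k|^2 + nu2^2)/N_k, and quadratic
   growth |x - x*|^2 <= 2/tau (f x - f x* ) bounds |x_k|^2 by the gap; finally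
   N_0 <= N_k. *)

Section Euclidean.
Context {R : realType} {n : nat}.
Implicit Types (u v w : 'rV[R]_n).

Lemma dotvE u v : dotv u v = (u *m v^T) 0 0.
Proof. by rewrite /dotv mxE; apply: eq_bigr => i _; rewrite mxE. Qed.

Lemma dotvC u v : dotv u v = dotv v u.
Proof. by apply: eq_bigr => i _; rewrite mulrC. Qed.

Lemma dotvDl u v w : dotv (u + v) w = dotv u w + dotv v w.
Proof. by rewrite /dotv -big_split; apply: eq_bigr => i _; rewrite !mxE mulrDl. Qed.

Lemma dotvZl (a : R) u v : dotv (a *: u) v = a * dotv u v.
Proof. by rewrite /dotv mulr_sumr; apply: eq_bigr => i _; rewrite !mxE mulrA. Qed.

Lemma dotvNl u v : dotv (- u) v = - dotv u v.
Proof. by rewrite -scaleN1r dotvZl mulN1r. Qed.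

Lemma dotvBl u v w : dotv (u - v) w = dotv u w - dotv v w.
Proof. by rewrite dotvDl dotvNl. Qed.

Lemma dotvDr u v w : dotv u (v + w) = dotv u v + dotv u w.
Proof. by rewrite dotvC dotvDl !(dotvC u). Qed.

Lemma dotvZr (a : R) u v : dotv u (a *: v) = a * dotv u v.
Proof. by rewrite dotvC dotvZl dotvC. Qed.

Lemma dotvNr u v : dotv u (- v) = - dotv u v.
Proof. by rewrite dotvC dotvNl dotvC. Qed.

Lemma dotvBr u v w : dotv u (v - w) = dotv u v - dotv u w.
Proof. by rewrite dotvDr dotvNr. Qed.

Lemma sqnorm_ge0 u : 0 <= sqnorm u.
Proof. by apply: sumr_ge0 => i _; rewrite -expr2 sqr_ge0. Qed.

Lemma sqnormN u : sqnorm (- u) = sqnorm u.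
Proof. by rewrite /sqnorm dotvNl dotvNr opprK. Qed.

Lemma sqnormZ (a : R) u : sqnorm (a *: u) = a ^+ 2 * sqnorm u.
Proof. by rewrite /sqnorm dotvZl dotvZr mulrA expr2. Qed.

Lemma sqnormD_le u v : sqnorm (u + v) <= 2 * sqnorm u + 2 * sqnorm v.
Proof.
have := sqnorm_ge0 (u - v).
rewrite /sqnorm !dotvBl !dotvBr !dotvDl !dotvDr (dotvC v u); lra.
Qed.

Lemma dotv_Young u v (a : R) : 0 < a ->
  2 * dotv u v <= a * sqnorm u + a^-1 * sqnorm v.
Proof.
move=> a_gt0; have a_neq0 : a != 0 by rewrite gt_eqF.
have := sqnorm_ge0 (a *: u - v).
rewrite /sqnorm dotvBl !dotvBr !dotvZl !dotvZr (dotvC v u).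
set p := dotv u u; set q := dotv u v; set r := dotv v v => h.
have : 0 <= a^-1 * (a * (a * p) - a * q - (a * q - r)).
  by rewrite mulr_ge0 // invr_ge0 ltW.
have -> : a^-1 * (a * (a * p) - a * q - (a * q - r)) = a * p - 2 * q + a^-1 * r.
  by field.
lra.
Qed.

Definition bform (A : 'M[R]_n) u v := dotv (u *m A) v.

Lemma bformBl A u v w : bform A (u - v) w = bform A u w - bform A v w.
Proof. by rewrite /bform mulmxBl dotvBl. Qed.

Lemma bformZl A a u v : bform A (a *: u) v = a * bform A u v.
Proof. by rewrite /bform -scalemxAl dotvZl. Qed.

Lemma bformBr A u v w : bform A u (v - w) = bform A u v - bform A u w.
Proof. exact: dotvBr. Qed.

Lemma bformZr A a u v : bform A u (a *: v) = a * bform A u v.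
Proof. exact: dotvZr. Qed.

Lemma bformC A u v : A^T = A -> bform A u v = bform A v u.
Proof.
move=> A_sym; rewrite /bform !dotvE.
have tr00 (M : 'M[R]_1) : M 0 0 = M^T 0 0 by rewrite mxE.
by rewrite tr00 !trmx_mul trmxK A_sym mulmxA.
Qed.

Lemma loewner_bform {lo hi A} u : loewner_between lo hi A ->
  lo * sqnorm u <= bform A u u <= hi * sqnorm u.
Proof. by rewrite /bform dotvE => /(_ u). Qed.

(* Expand [0 <= bform A (v - u / hi) (v - u / hi)] with [u = v *m A] and use
   [bform A u u <= hi * sqnorm u]. *)
Lemma sqnorm_mulmx_le_bform {lo hi A} v : A^T = A -> 0 <= lo -> 0 < hi ->
  loewner_between lo hi A -> sqnorm (v *m A) <= hi * bform A v v.
Proof.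
move=> A_sym lo_ge0 hi_gt0 AB; have hi_neq0 : hi != 0 by rewrite gt_eqF.
set u := v *m A.
have bform_ge0 w : 0 <= bform A w w.
  have /andP[+ _] := loewner_bform w AB.
  exact/le_trans/mulr_ge0/sqnorm_ge0.
have /andP[_ Auu] := loewner_bform u AB.
have := bform_ge0 (v - hi^-1 *: u).
rewrite !bformBl !bformBr !bformZl !bformZr (bformC _ u v A_sym).
have -> : bform A v u = sqnorm u by [].
have Auu' : hi^-1 * (hi^-1 * bform A u u) <= hi^-1 * sqnorm u.
  by rewrite ler_pM2l ?invr_gt0 // mulrC ler_pdivrMr // mulrC.
move=> expansion_ge0; have : 0 <= hi * (bform A v v - hi^-1 * sqnorm u).
  by rewrite pmulr_rge0 //; lra.
by rewrite mulrBr mulrA mulfV // mul1r subr_ge0.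
Qed.

End Euclidean.

Section SmoothStronglyConvex.
Context {R : realType} {n : nat}.
Context {f : 'rV[R]_n -> R} {gradf : 'rV[R]_n -> 'rV[R]_n} {tau L : R}.
Hypothesis f_grad : has_gradient f gradf.
Hypothesis f_sc : strongly_convex tau f.
Hypothesis tau_gt0 : 0 < tau.
Hypothesis L_gt0 : 0 < L.
Hypothesis gradf_lip :
  forall y z, sqnorm (gradf y - gradf z) <= L ^+ 2 * sqnorm (y - z).
Implicit Types (u v y z : 'rV[R]_n).

Lemma is_derive_along_line y v (t : R) :
  is_derive t 1 (fun s : R => f (y + s *: v)) (dotv (gradf (y + t *: v)) v).
Proof.
have [f_diff f_d] := f_grad (y + t *: v).
have quotE : (fun h : R => h^-1 *:
    (((fun s : R => f (y + s *: v)) \o shift t) (h *: 1) - f (y + t *: v))) =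
  (fun h : R => h^-1 *: ((f \o shift (y + t *: v)) (h *: v) - f (y + t *: v))).
  apply/funext => h /=; congr (_ *: (f _ - _)).
  by rewrite /shift /= scalerDl [h%:A]mulr1 addrCA.
apply: DeriveDef; first by rewrite /derivable quotE; exact: diff_derivable.
by rewrite /derive quotE -/(derive f _ v) deriveE.
Qed.

Lemma dotv_gradient_increment_le y v (s : R) : 0 < s ->
  dotv (gradf (y + s *: v) - gradf y) v <= L * s * sqnorm v.
Proof.
move=> s_gt0; set u := gradf (y + s *: v) - gradf y.
have Ls_gt0 : 0 < L * s by exact: mulr_gt0.
have u_le : sqnorm u <= L ^+ 2 * (s ^+ 2 * sqnorm v).
  by have := gradf_lip (y + s *: v) y; rewrite addrAC subrr add0r sqnormZ.
have := @dotv_Young _ _ u v (L * s)^-1; rewrite invr_gt0 invrK => /(_ Ls_gt0).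
have : (L * s)^-1 * sqnorm u <= L * s * sqnorm v.
  rewrite mulrC ler_pdivrMr //; apply: le_trans u_le _.
  by rewrite [leRHS](_ : _ = L ^+ 2 * (s ^+ 2 * sqnorm v)) //; ring.
lra.
Qed.

(* [s |-> f (y + s v) - <gradf y, v> s - L/2 |v|^2 s^2] is nonincreasing on [0, 1]. *)
Lemma smooth_upper_bound y v :
  f (y + v) <= f y + dotv (gradf y) v + L / 2 * sqnorm v.
Proof.
set a := dotv (gradf y) v; set b := L / 2 * sqnorm v.
pose psi := ((fun s : R => f (y + s *: v)) - (fun s => a * s)) - (fun s => b * (s * s)).
have psi_der (s : R) :
    is_derive s 1 psi (dotv (gradf (y + s *: v)) v - a - b * (s + s)).
  have lin_der : is_derive s 1 (fun s : R => a * s) a.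
    by have := is_deriveZ a (is_derive_id s 1); rewrite [a *: 1]mulr1.
  have sq_der : is_derive s 1 (fun s : R => b * (s * s)) (b * (s + s)).
    have := is_deriveZ b (is_deriveM (is_derive_id s 1) (is_derive_id s 1)).
    by rewrite /GRing.scale /= !mulr1.
  exact: is_deriveB (is_deriveB (is_derive_along_line y v s) lin_der) sq_der.
have : psi 1 <= psi 0.
  apply: (@ler0_derive1_le_cc R psi 0 1); rewrite ?bound_itvE ?ler01 //.
  - move=> s; rewrite in_itv /= => /andP[s_gt0 _].
    rewrite derive1E; have [_ ->] := psi_der s.
    have := dotv_gradient_increment_le y v s s_gt0; rewrite dotvBl /a /b; lra.
  - apply: continuous_subspaceT => s.
    by apply/differentiable_continuous/derivable1_diffP; have [] := psi_der s.
have psiE (s : R) : psi s = f (y + s *: v) - a * s - b * (s * s) by [].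
rewrite !psiE scale1r scale0r addr0 !mulr0 !mulr1 !subr0; lra.
Qed.

(* [q h] is the difference quotient of [s |-> f (y + s v)] at [0]; strong
   convexity bounds it by [C + tau/2 |v|^2 h] for [0 < h <= 1], and h -> 0+. *)
Lemma strongly_convex_gradient_ineq y z :
  f y + dotv (gradf y) (z - y) + tau / 2 * sqnorm (z - y) <= f z.
Proof.
set v := z - y; set S := sqnorm v; set C := f z - f y - tau / 2 * S.
pose q (h : R) := h^-1 *:
  (((fun s : R => f (y + s *: v)) \o shift 0) (h *: 1) - f (y + 0 *: v)).
have der := is_derive_along_line y v 0; rewrite scale0r addr0 in der.
have q_cvg : q @ 0^'+ --> dotv (gradf y) v.
  by apply: cvg_dnbhs_at_right; have [der_ex <-] := der; exact: der_ex.
have r_cvg : (fun h : R => C + tau / 2 * S * h) @ 0^'+ --> C.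
  apply: cvg_at_right_filter.
  rewrite -[X in _ --> X]addr0 -[X in _ --> _ + X](mulr0 (tau / 2 * S)).
  by apply: cvgD; [exact: cvg_cst | apply: cvgM; [exact: cvg_cst | exact: cvg_id]].
suff : dotv (gradf y) v <= C by rewrite /C; lra.
apply: ler_cvg_to q_cvg r_cvg _.
near=> h.
have h_gt0 : 0 < h by near: h; exact: nbhs_right_gt.
have h_le1 : h <= 1 by near: h; exact: nbhs_right_le.
have := f_sc z y h; rewrite h_le1 ltW // => /(_ isT).
have -> : h *: z + (1 - h) *: y = y + h *: v.
  by apply/rowP => i; rewrite !mxE; ring.
rewrite -/v -/S => f_chord.
rewrite /q /shift /= [h%:A]mulr1 addr0 scale0r addr0.
rewrite /GRing.scale /= ler_pdivrMl // /C; nra.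
Unshelve. all: end_near.
Qed.

Section Minimizer.
Context {xs : 'rV[R]_n}.
Hypothesis xs_min : forall y, f xs <= f y.

Lemma dotv_gradient_min_eq0 v : dotv (gradf xs) v = 0.
Proof.
have := is_derive_along_line xs v 0; rewrite scale0r addr0 => -[_ <-].
have der0 : is_derive (0 : R) 1 (fun s : R => f (xs + s *: v)) 0.
  apply: (@derive1_at_min _ _ (-1) 1); rewrite ?in_itv /= ?ltrN10 ?ltr01 //.
  - by move=> s _; have [] := is_derive_along_line xs v s.
  - by move=> s _; rewrite scale0r addr0.
by have [_ ->] := der0.
Qed.

Lemma strongly_convex_quadratic_growth y :
  tau / 2 * sqnorm (y - xs) <= f y - f xs.
Proof.
by have := strongly_convex_gradient_ineq xs y; rewrite dotv_gradient_min_eq0; lra.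
Qed.

Lemma sqnorm_le_gap y : sqnorm y <= 4 / tau * (f y - f xs) + 2 * sqnorm xs.
Proof.
have := sqnormD_le (y - xs) xs; rewrite subrK.
suff : 2 * sqnorm (y - xs) <= 4 / tau * (f y - f xs) by lra.
have -> : 2 * sqnorm (y - xs) = 4 / tau * (tau / 2 * sqnorm (y - xs)).
  by field; rewrite gt_eqF.
by apply: ler_wpM2l; [rewrite divr_ge0 ?ltW | exact: strongly_convex_quadratic_growth].
Qed.

Lemma strongly_convex_PL y : 2 * tau * (f y - f xs) <= sqnorm (gradf y).
Proof.
have lower := strongly_convex_gradient_ineq y xs.
have := @dotv_Young _ _ (- gradf y) (xs - y) tau^-1.
rewrite invr_gt0 dotvNl sqnormN invrK => /(_ tau_gt0) Young.
have : 2 * (f y - f xs) <= tau^-1 * sqnorm (gradf y) by lra.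
move=> /(ler_wpM2l (ltW tau_gt0)); rewrite mulVKf ?gt_eqF //; lra.
Qed.

Lemma variance_bound_le_gap (nu1 nu2 N : R) y : 0 < N ->
  (nu1 ^+ 2 * sqnorm y + nu2 ^+ 2) / N <=
    4 * nu1 ^+ 2 / (tau * N) * (f y - f xs) + (2 * nu1 ^+ 2 * sqnorm xs + nu2 ^+ 2) / N.
Proof.
move=> N_gt0.
have -> : 4 * nu1 ^+ 2 / (tau * N) * (f y - f xs) +
    (2 * nu1 ^+ 2 * sqnorm xs + nu2 ^+ 2) / N =
    (nu1 ^+ 2 * (4 / tau * (f y - f xs) + 2 * sqnorm xs) + nu2 ^+ 2) / N.
  by field; rewrite !gt_eqF.
rewrite ler_pM2r ?invr_gt0 // lerD2r.
exact/ler_wpM2l/sqnorm_le_gap/sqr_ge0.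
Qed.

End Minimizer.

Lemma strong_convexity_le_smoothness : (0 < n)%N -> tau <= L.
Proof.
move=> n_gt0; set v := const_mx 1 : 'rV[R]_n.
have v_gt0 : 0 < sqnorm v.
  rewrite /sqnorm /dotv (eq_bigr (fun=> 1)); last by move=> i _; rewrite !mxE mulr1.
  by rewrite sumr_const card_ord ltr0n.
have := strongly_convex_gradient_ineq 0 v; rewrite subr0.
have := smooth_upper_bound 0 v; rewrite add0r => smooth sc.
have : tau / 2 * sqnorm v <= L / 2 * sqnorm v by lra.
by rewrite ler_pM2r // ler_pM2r ?invr_gt0.
Qed.

Lemma preconditioned_step_descent {lo hi A} y g :
  A^T = A -> 0 <= lo -> 0 < hi -> loewner_between lo hi A ->
  f (y - (1 / (L * hi)) *: (g *m A)) <=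
    f y - (2 * L * hi)^-1 *
      (bform A (gradf y) (gradf y) - bform A (gradf y - g) (gradf y - g)).
Proof.
move=> A_sym lo_ge0 hi_gt0 AB; set gf := gradf y; set G := (2 * L * hi)^-1.
have -> : 1 / (L * hi) = 2 * G by rewrite /G; field; rewrite !gt_eqF.
have := smooth_upper_bound y (- ((2 * G) *: (g *m A))).
rewrite dotvNr dotvZr sqnormN sqnormZ (dotvC gf) -/(bform A g gf).
have : L / 2 * ((2 * G) ^+ 2 * sqnorm (g *m A)) <= G * bform A g g.
  rewrite [leRHS](_ : _ = L / 2 * ((2 * G) ^+ 2 * (hi * bform A g g))); last first.
    by rewrite /G; field; rewrite !gt_eqF.
  apply: ler_wpM2l; first by rewrite divr_ge0 ?ltW.
  apply: ler_wpM2l; first exact: sqr_ge0.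
  exact: (sqnorm_mulmx_le_bform g A_sym lo_ge0 hi_gt0 AB).
have : bform A (gf - g) (gf - g) = bform A gf gf - 2 * bform A g gf + bform A g g.
  by rewrite !bformBl !bformBr (bformC _ gf g A_sym); ring.
move=> -> step_le smooth; lra.
Qed.

Lemma preconditioned_step_gap xs lo hi A y g : (forall z, f xs <= f z) ->
  0 < lo -> lo <= hi -> A^T = A -> loewner_between lo hi A ->
  f (y - (1 / (L * hi)) *: (g *m A^T)) - f xs <=
    (1 - tau * lo / (L * hi)) * (f y - f xs) + (2 * L)^-1 * sqnorm (gradf y - g).
Proof.
move=> xs_min lo_gt0 lo_le_hi A_sym AB; have hi_gt0 := lt_le_trans lo_gt0 lo_le_hi.
have descent := preconditioned_step_descent y g A_sym (ltW lo_gt0) hi_gt0 AB.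
rewrite A_sym; set gf := gradf y in descent *; set w := gf - g in descent *.
set G := (2 * L * hi)^-1 in descent *.
have G_ge0 : 0 <= G by rewrite invr_ge0 !mulr_ge0 ?ltW.
have /andP[gf_lo _] := loewner_bform gf AB.
have /andP[_ w_hi] := loewner_bform w AB.
have gf_PL : G * (lo * (2 * tau * (f y - f xs))) <= G * bform A gf gf.
  apply/ler_wpM2l/(le_trans _ gf_lo)/ler_wpM2l/strongly_convex_PL => //.
  exact: ltW.
have w_le : G * bform A w w <= G * (hi * sqnorm w) by exact: ler_wpM2l.
have -> : (2 * L)^-1 = G * hi by rewrite /G; field; rewrite !gt_eqF.
have -> : tau * lo / (L * hi) = G * (lo * (2 * tau)).
  by rewrite /G; field; rewrite !gt_eqF.
lra.
Qed.

End SmoothStronglyConvex.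

Section GridBoxes.
Context {R : realType} {n : nat}.

Definition grid_box (m : nat) (z : {ffun 'I_n -> int}) : set 'rV[R]_n :=
  [set u | forall j, `|u 0 j - (z j)%:~R / m.+1%:R| < m.+1%:R^-1].

Lemma grid_box_floor m (u : 'rV[R]_n) :
  grid_box m [ffun j => Num.floor (m.+1%:R * u 0 j)] u.
Proof.
move=> j; rewrite ffunE; have m_gt0 : 0 < m.+1%:R :> R by rewrite ltr0n.
have := floor_le (m.+1%:R * u 0 j); have := floorD1_gt (m.+1%:R * u 0 j).
rewrite intrD /=; set F := (Num.floor _)%:~R => F_gt F_le.
have -> : u 0 j - F / m.+1%:R = (m.+1%:R * u 0 j - F) / m.+1%:R.
  by field; rewrite gt_eqF.
rewrite ger0_norm; last by rewrite divr_ge0 ?subr_ge0 // ltW.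
by rewrite -[X in _ < X]mul1r ltr_pM2r ?invr_gt0 //; lra.
Qed.

Lemma open_grid_box_cover (U : set 'rV[R]_n) u : open U -> U u ->
  exists m z, grid_box m z u /\ grid_box m z `<=` U.
Proof.
move=> U_open Uu.
have /nbhs_ballP [e /= e_gt0 ball_sub] : nbhs u U by exact: open_nbhs_nbhs.
set m := Num.truncn (2 / e); set r := m.+1%:R^-1 : R.
have m_gt0 : 0 < m.+1%:R :> R by rewrite ltr0n.
have r_lt : r + r < e.
  have : 2 / e < m.+1%:R by exact: truncnS_gt.
  rewrite ltr_pdivrMr // mulrC -ltr_pdivrMr //.
  by rewrite (_ : r + r = 2 / m.+1%:R) // /r; field; rewrite gt_eqF.
set z := [ffun j => Num.floor (m.+1%:R * u 0 j)].
exists m, z; split; first exact: grid_box_floor.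
move=> w w_box; apply: ball_sub; split => // i j; rewrite (ord1 i) /ball /=.
have := grid_box_floor m u j; have := w_box j; rewrite -/z -/r.
set c := (z j)%:~R / m.+1%:R => w_c u_c.
rewrite (_ : u 0 j - w 0 j = (u 0 j - c) - (w 0 j - c)); last by ring.
by apply: le_lt_trans (ler_normB _ _) _; lra.
Qed.

End GridBoxes.

Section RowVectorMeasurability.
Context {d : measure_display} {T : measurableType d} {R : realType} {n : nat}.
Context {X : T -> 'rV[R]_n}.
Hypothesis X_meas : forall i : 'I_n, measurable_fun setT (fun t => X t 0 i).

Lemma measurable_preimage_grid_box m z : measurable (X @^-1` grid_box m z).
Proof.
have -> : X @^-1` grid_box m z = \big[setI/setT]_(j <- index_enum 'I_n)
    ((fun t => X t 0 j) @^-1` ball ((z j)%:~R / m.+1%:R : R) m.+1%:R^-1).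
  rewrite -bigcap_seq; apply/seteqP; split => t /=.
    by move=> t_box j _; rewrite /ball /= distrC; exact: t_box.
  by move=> t_box j; have := t_box j (mem_index_enum j); rewrite /ball /= distrC.
apply: bigsetI_measurable => j _.
by rewrite -[X in measurable X]setTI; apply: X_meas => //; exact: measurable_ball.
Qed.

(* An open set is the union of the countably many grid boxes it contains. *)
Lemma measurable_preimage_open (U : set 'rV[R]_n) :
  open U -> measurable (X @^-1` U).
Proof.
move=> U_open.
pose S p := if pselect (grid_box p.1 p.2 `<=` U) then X @^-1` grid_box p.1 p.2 else set0.
have -> : X @^-1` U = \bigcup_p S p.
  apply/seteqP; split => t /=; last first.
    by move=> [p _]; rewrite /S; case: pselect => // box_sub /box_sub.
  move=> /(open_grid_box_cover _ _ U_open) [m [z [t_box box_sub]]].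
  by exists (m, z) => //; rewrite /S /=; case: pselect.
apply: countable_bigcupT_measurable; first exact: countableP.
move=> p; rewrite /S; case: pselect => [box_sub|not_sub].
  - exact: measurable_preimage_grid_box.
  - exact: measurable0.
Qed.

Lemma measurable_comp_continuous (g : 'rV[R]_n -> R) :
  continuous g -> measurable_fun setT (g \o X).
Proof.
move=> /continuousP g_cont.
apply: (measurability _ (RGenOpens.measurableE R)) => _ [_ [a [b ->] <-]].
by rewrite setTI comp_preimage; apply/measurable_preimage_open/g_cont/interval_open.
Qed.

End RowVectorMeasurability.

Lemma gen_sigma_setT {R : realType} {T : Type} {n : nat}
    (x : nat -> T -> 'rV[R]_n) k :
  gen_sigma x k setT.
Proof.
have [G_set0 G_setD _] := smallest_sigma_algebra setT
  [set A | exists j i (B : set R),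
     (j < k)%N /\ measurable B /\ A = (fun t => x j t 0 i) @^-1` B].
by have := G_setD set0 G_set0; rewrite setD0.
Qed.

Section Expectation.
Context {d : measure_display} {T : measurableType d} {R : realType}.
Local Open Scope ereal_scope.

Lemma ge0_integral_lin2 (mu : {measure set T -> \bar R}) (c K : R) (v w : T -> R) :
  (0 <= c)%R -> (0 <= K)%R -> (forall t, 0 <= v t)%R -> (forall t, 0 <= w t)%R ->
  measurable_fun setT v -> measurable_fun setT w ->
  \int[mu]_t (c * v t + K * w t)%:E =
    c%:E * \int[mu]_t (v t)%:E + K%:E * \int[mu]_t (w t)%:E.
Proof.
move=> c_ge0 K_ge0 v_ge0 w_ge0 v_meas w_meas.
have vE_ge0 t : setT t -> 0 <= (v t)%:E by rewrite lee_fin.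
have wE_ge0 t : setT t -> 0 <= (w t)%:E by rewrite lee_fin.
have /measurable_EFinP vE_meas := v_meas; have /measurable_EFinP wE_meas := w_meas.
rewrite (eq_integral (fun t => c%:E * (v t)%:E + K%:E * (w t)%:E)) //.
rewrite ge0_integralD //; last 4 first.
- by move=> t _; rewrite mule_ge0 ?lee_fin.
- exact: emeasurable_funM.
- by move=> t _; rewrite mule_ge0 ?lee_fin.
- exact: emeasurable_funM.
by rewrite (ge0_integralZl_EFin _ _ vE_ge0) // (ge0_integralZl_EFin _ _ wE_ge0).
Qed.

Lemma integrable_ae_le_ge0_integral {mu : {measure set T -> \bar R}} {Z g : T -> R} :
  mu.-integrable setT (EFin \o Z) -> measurable_fun setT g -> (forall t, 0 <= g t)%R ->
  {ae mu, forall t, (Z t <= g t)%R} ->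
  \int[mu]_t (Z t)%:E <= \int[mu]_t (g t)%:E.
Proof.
move=> Z_int g_meas g_ge0 Z_le.
have Z_meas : measurable_fun setT (EFin \o Z).
  by have /integrableP[] := Z_int.
have neg_fin := integrable_neg_fin_num measurableT Z_int.
rewrite integralE leeBlDr //; apply: le_trans (leeDl _ _).
- apply: ae_ge0_le_integral => //.
  + exact: measurable_funepos.
  + by move=> t _; rewrite lee_fin.
  + exact/measurable_EFinP.
  + by apply: filterS Z_le => t Zt _; rewrite funeposE ge_max /= !lee_fin Zt g_ge0.
- by apply: integral_ge0 => t _; exact: funeneg_ge0.
Qed.

Lemma cond_exp_integral {P : probability T R} {G : set (set T)} {Y Z : T -> R} :
  is_cond_exp P G Y Z -> G setT -> \int[P]_t (Y t)%:E = \int[P]_t (Z t)%:E.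
Proof. by move=> [_ _ _ YZ] /YZ. Qed.

Lemma expectation_recursion_le {P : probability T R} {G : set (set T)}
    {a a' s Z : T -> R} {c K p q : R} :
  G setT -> is_cond_exp P G s Z ->
  (0 <= c)%R -> (0 <= K)%R -> (0 <= p)%R -> (0 <= q)%R ->
  (forall t, 0 <= a t)%R -> (forall t, 0 <= a' t)%R -> (forall t, 0 <= s t)%R ->
  measurable_fun setT a -> measurable_fun setT a' ->
  {ae P, forall t, (a' t <= c * a t + K * s t)%R} ->
  {ae P, forall t, (Z t <= p * a t + q)%R} ->
  \int[P]_t (a' t)%:E <= (c + K * p)%:E * \int[P]_t (a t)%:E + (K * q)%:E.
Proof.
move=> G_T s_cond c_ge0 K_ge0 p_ge0 q_ge0 a_ge0 a'_ge0 s_ge0 a_meas a'_meas a'_le Z_le.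
have [s_int Z_int _ _] := s_cond.
have s_meas : measurable_fun setT s by have /integrableP[/measurable_EFinP] := s_int.
have a_int_ge0 : 0 <= \int[P]_t (a t)%:E by apply: integral_ge0 => t _; rewrite lee_fin.
have step : \int[P]_t (a' t)%:E <=
    c%:E * \int[P]_t (a t)%:E + K%:E * \int[P]_t (s t)%:E.
  rewrite -ge0_integral_lin2 //; apply: ae_ge0_le_integral => //.
  - by move=> t _; rewrite lee_fin.
  - exact/measurable_EFinP.
  - by move=> t _; rewrite lee_fin addr_ge0 ?mulr_ge0.
  - apply/measurable_EFinP/measurable_funD; exact: measurable_funM.
  - by apply: filterS a'_le => t a't _; rewrite lee_fin.
have noise : \int[P]_t (s t)%:E <= p%:E * \int[P]_t (a t)%:E + q%:E.
  rewrite (cond_exp_integral s_cond G_T).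
  apply: le_trans (integrable_ae_le_ge0_integral Z_int _ _ Z_le) _.
  - by apply: measurable_funD => //; exact: measurable_funM.
  - by move=> t; rewrite addr_ge0 ?mulr_ge0.
  rewrite (eq_integral (fun t => (p * a t + q * (cst 1%R) t)%:E)); last first.
    by move=> t _; rewrite /= mulr1.
  rewrite ge0_integral_lin2 //.
  rewrite [X in q%:E * X](eq_integral (cst 1)) // integral_cst // mul1e.
  by rewrite [X in q%:E * X](_ : _ = 1) ?mule1 //; exact: probability_setT.
apply: le_trans step _.
rewrite EFinD ge0_muleDl ?lee_fin ?mulr_ge0 // -addeA leeD2l //.
apply: le_trans (lee_wpmul2l _ noise) _; first by rewrite lee_fin.
by rewrite ge0_muleDr ?mule_ge0 ?lee_fin // muleA -!EFinM.
Qed.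

End Expectation.

Section PreconditionedGradientStep.
Context {d : measure_display} {T : measurableType d} {R : realType} {n : nat}.
Context {Q : probability T R} {G : set (set T)}.
Context {f : 'rV[R]_n -> R} {gradf : 'rV[R]_n -> 'rV[R]_n} {xs : 'rV[R]_n}.
Context {tau L lo hi nu1 nu2 N : R}.
Context {y y' g : T -> 'rV[R]_n} {A : T -> 'M[R]_n} {Z : T -> R}.
Hypotheses (f_grad : has_gradient f gradf) (f_sc : strongly_convex tau f).
Hypotheses (tau_gt0 : 0 < tau) (L_gt0 : 0 < L).
Hypothesis gradf_lip :
  forall u v, sqnorm (gradf u - gradf v) <= L ^+ 2 * sqnorm (u - v).
Hypothesis xs_min : forall u, f xs <= f u.
Hypotheses (n_gt0 : (0 < n)%N) (lo_gt0 : 0 < lo) (lo_le_hi : lo <= hi) (N_gt0 : 0 < N).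
Hypothesis y'E : forall t, y' t = y t - (1 / (L * hi)) *: (g t *m (A t)^T).
Hypothesis A_sym : forall t, (A t)^T = A t.
Hypothesis A_bounds : {ae Q, forall t, loewner_between lo hi (A t)}.
Hypotheses (y_meas : forall i, measurable_fun setT (fun t => y t 0 i))
  (y'_meas : forall i, measurable_fun setT (fun t => y' t 0 i)).
Hypotheses (G_T : G setT) (Z_cond : is_cond_exp Q G (fun t => sqnorm (gradf (y t) - g t)) Z).
Hypothesis Z_le : {ae Q, forall t, Z t <= (nu1 ^+ 2 * sqnorm (y t) + nu2 ^+ 2) / N}.

Lemma expected_gap_step :
  (\int[Q]_t ((f (y' t) - f xs)%:E) <=
    (1 - tau * lo / (L * hi) + 2 * nu1 ^+ 2 / (L * tau * N))%:E *
      \int[Q]_t ((f (y t) - f xs)%:E) +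
    ((2 * nu1 ^+ 2 * sqnorm xs + nu2 ^+ 2) / (2 * L * N))%:E)%E.
Proof.
set K := (2 * L)^-1; set p := 4 * nu1 ^+ 2 / (tau * N).
set q := (2 * nu1 ^+ 2 * sqnorm xs + nu2 ^+ 2) / N.
have -> : 2 * nu1 ^+ 2 / (L * tau * N) = K * p by rewrite /K /p; field; rewrite !gt_eqF.
have -> : (2 * nu1 ^+ 2 * sqnorm xs + nu2 ^+ 2) / (2 * L * N) = K * q.
  by rewrite /K /q; field; rewrite !gt_eqF.
have hi_gt0 := lt_le_trans lo_gt0 lo_le_hi.
have K_ge0 : 0 <= K by rewrite invr_ge0 mulr_ge0 ?ler0n ?ltW.
have p_ge0 : 0 <= p.
  by apply: divr_ge0; apply: mulr_ge0; rewrite ?ler0n ?sqr_ge0 ?ltW.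
have q_ge0 : 0 <= q.
  apply: divr_ge0; last exact: ltW.
  by rewrite addr_ge0 ?sqr_ge0 // mulr_ge0 ?sqnorm_ge0 // mulr_ge0 ?ler0n ?sqr_ge0.
have c_ge0 : 0 <= 1 - tau * lo / (L * hi).
  rewrite subr_ge0 ler_pdivrMr ?mulr_gt0 // mul1r.
  by apply: ler_pM => //; [exact: ltW | exact: ltW | exact: strong_convexity_le_smoothness].
have f_cont : continuous f by move=> u; exact: differentiable_continuous (f_grad u).1.
have gap_meas (X : T -> 'rV[R]_n) : (forall i, measurable_fun setT (fun t => X t 0 i)) ->
    measurable_fun setT (fun t => f (X t) - f xs).
  move=> X_meas; apply: measurable_funB (measurable_cst _).
  exact: measurable_comp_continuous.
have gap_ge0 (X : T -> 'rV[R]_n) t : 0 <= f (X t) - f xs by rewrite subr_ge0.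
apply: (expectation_recursion_le G_T Z_cond c_ge0 K_ge0 p_ge0 q_ge0 (gap_ge0 y)
  (gap_ge0 y') _ (gap_meas _ y_meas) (gap_meas _ y'_meas)).
- by move=> t; exact: sqnorm_ge0.
- apply: filterS A_bounds => t At_bounds; rewrite y'E.
  exact: preconditioned_step_gap.
- apply: filterS Z_le => t Zt_le; apply: le_trans Zt_le _.
  exact: variance_bound_le_gap.
Qed.

End PreconditionedGradientStep.
Theorem mainTheorem1
  (R : realType) (n o : nat)
  (* (Omega, F, P): the probability space of omega, and the random vector xi *)
  (d : measure_display) (Omega : measurableType d) (P : probability Omega R)
  (xi : Omega -> 'rV[R]_o)
  (* (Theta, Q): the probability space on which the algorithm runs *)
  (d' : measure_display) (Theta : measurableType d') (Q : probability Theta R)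
  (F : 'rV[R]_n -> 'rV[R]_o -> R) (gradF : 'rV[R]_n -> 'rV[R]_o -> 'rV[R]_n)
  (f : 'rV[R]_n -> R) (gradf : 'rV[R]_n -> 'rV[R]_n) (xstar : 'rV[R]_n)
  (tau L nu1 nu2 lam_lo lam_hi : R)
  (N : nat -> nat)
  (om : nat -> nat -> Theta -> Omega)       (* om j k = omega_{j+1,k} *)
  (H : nat -> Theta -> 'M[R]_n)
  (x0 : 'rV[R]_n) (x : nat -> Theta -> 'rV[R]_n) :
  (* xi is a random vector *)
  (forall i : 'I_o, measurable_fun setT (fun w => xi w 0 i)) ->
  (* f(x) = E[F(x, omega)] *)
  (forall y, P.-integrable setT (fun w => (F y (xi w))%:E)) ->
  (forall y, ((f y)%:E = \int[P]_w (F y (xi w))%:E)%E) ->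
  0 < tau -> strongly_convex tau f ->
  (forall y, f xstar <= f y) ->
  (* (a) *)
  (forall w : Omega, convex_fun (fun y => F y (xi w))) ->
  (forall w : Omega, has_gradient (fun y => F y (xi w)) (fun y => gradF y (xi w))
                     /\ continuous (fun y => gradF y (xi w))) ->
  0 < L -> has_gradient f gradf ->
  (forall y z, sqnorm (gradf y - gradf z) <= L ^+ 2 * sqnorm (y - z)) ->
  (* step sizes and sample sizes *)
  (forall k, (0 < N k)%N) -> (forall k, (N k <= N k.+1)%N) ->
  2 * nu1 ^+ 2 * lam_hi / (tau ^+ 2 * lam_lo) < (N 0)%:R ->
  (* the iteration, with gamma_k = 1 / (L * lam_hi) *)
  (forall t, x 0 t = x0) ->
  (forall k t, x k.+1 t = x k t -
      (1 / (L * lam_hi)) *: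
        (((N k)%:R^-1 *: \sum_(j < N k) gradF (x k t) (xi (om j k t)))
           *m (H k t)^T)) ->
  (* the iterates are random vectors *)
  (forall k (i : 'I_n), measurable_fun setT (fun t => x k t 0 i)) ->
  (* (b) *)
  0 < nu1 -> 0 < nu2 ->
  (forall k,
     let wbar := fun t => gradf (x k t) -
        (N k)%:R^-1 *: \sum_(j < N k) gradF (x k t) (xi (om j k t)) in
     (exists Z, is_cond_exp Q (gen_sigma x k) (fun t => sqnorm (wbar t)) Z /\
        {ae Q, forall t, Z t <= (nu1 ^+ 2 * sqnorm (x k t) + nu2 ^+ 2) / (N k)%:R}) /\
     (forall i : 'I_n,
        is_cond_exp Q (gen_sigma x k) (fun t => wbar t 0 i) (fun _ => 0))) ->
  (* (c) *)
  0 < lam_lo -> lam_lo <= lam_hi ->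
  (forall k (i j : 'I_n) (B : set R), measurable B ->
     gen_sigma x k ((fun t => H k t i j) @^-1` B)) ->
  (forall k t, sym_pos_def (H k t)) ->
  (forall k, {ae Q, forall t, loewner_between lam_lo lam_hi (H k t)}) ->
  (* conclusion *)
  forall k : nat, (1 <= k)%N ->
    let rate : R := 1 - tau * lam_lo / (L * lam_hi) + 2 * nu1 ^+ 2 / (L * tau * (N 0)%:R) in
    let err : R := (2 * nu1 ^+ 2 * sqnorm xstar + nu2 ^+ 2) / (2 * L * (N k)%:R) in
    (\int[Q]_t ((f (x k.+1 t) - f xstar)%:E) <=
      rate%:E * \int[Q]_t ((f (x k t) - f xstar)%:E) + err%:E)%E.
Proof.
(* Not needed: the model [f = E F], convexity of [F], the initial point, positivity
   of nu1 and nu2, unbiasedness of the noise, adaptedness of [H], the lower bound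
   on [N 0]. *)
move=> _ _ _ tau_gt0 f_sc xs_min _ _ L_gt0 f_grad gradf_lip N_gt0 N_mono _ _ x_step
  x_meas _ _ noise lo_gt0 lo_le_hi _ H_sym H_loewner k _; cbv zeta.
have Nk_gt0 : 0 < (N k)%:R :> R by rewrite ltr0n.
(* [tau <= L] needs a nonzero vector; in dimension 0 both gaps vanish. *)
have [n0|n_gt0] := posnP n.
  subst n.
  have gap0 j : (\int[Q]_t ((f (x j t) - f xstar)%:E) = 0)%E.
    rewrite (eq_integral (cst 0%E)) ?integral0 // => t _.
    by rewrite /= (thinmx0 (x j t)) (thinmx0 xstar) subrr.
  rewrite !gap0 mule0 add0e lee_fin; apply: divr_ge0.
    by rewrite addr_ge0 ?sqr_ge0 // mulr_ge0 ?sqnorm_ge0 // mulr_ge0 ?ler0n ?sqr_ge0.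
  by rewrite !mulr_ge0 ?ler0n // ltW.
have [[Z [Z_cond Z_le]] _] := noise k.
apply: le_trans (expected_gap_step f_grad f_sc tau_gt0 L_gt0 gradf_lip xs_min n_gt0
  lo_gt0 lo_le_hi Nk_gt0 (x_step k) (fun t => (H_sym k t).1) (H_loewner k)
  (x_meas k) (x_meas k.+1) (gen_sigma_setT x k) Z_cond Z_le) _.
have gap_ge0 : (0 <= \int[Q]_t ((f (x k t) - f xstar)%:E))%E.
  by apply: integral_ge0 => t _; rewrite lee_fin subr_ge0.
rewrite leeD2r // lee_wpmul2r // lee_fin lerD2l.
apply: ler_wpM2l; first by rewrite mulr_ge0 ?ler0n ?sqr_ge0.
rewrite lef_pV2 ?posrE ?mulr_gt0 ?ltr0n // ler_pM2l ?mulr_gt0 // ler_nat.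
exact: homo_leq leqnn leq_trans N_mono _ _ (leq0n k).
Qed.
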